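(* Let $X,X'$ be second countable locally compact Hausdorff spaces, $T'\colon X'\to X'$ a local homeomorphism, $T\colon X\to X$ a continuous locally injective map, and $\pi\colon X'\to X$ a proper continuous surjection with $\pi\circ T'=T\circ\pi$. Then the following are equivalent: (a) there exists $\mathscr X\subseteq X$ with $T^{-1}(\mathscr X)=\mathscr X$ such that $\mathscr X$ is co-meagre in $X$, $\pi^{-1}(\mathscr X)$ is co-meagre in $X'$, and $\pi$ restricts to a bijection $\pi^{-1}(\mathscr X)\to\mathscr X$; (b) the set $X'_0=\{x'\in X':|\pi^{-1}(\pi(x'))|=1\}$ is dense in $X'$.
   Context: A subset is co-meagre if its complement is meagre, i.e. a countable union of sets whose closures have empty interior. *)

From HB Require Import structures.
From mathcomp Require Import all_boot all_order all_algebra.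
From mathcomp Require Import all_classical all_reals all_analysis.
Set Implicit Arguments. Unset Strict Implicit. Unset Printing Implicit Defensive.
Local Open Scope classical_set_scope.

Definition nowhere_dense (T : topologicalType) (A : set T) : Prop :=
  interior (closure A) = set0.

Definition meagre (T : topologicalType) (A : set T) : Prop :=
  exists F : nat -> set T, (forall n, nowhere_dense (F n)) /\ A = \bigcup_n F n.

Definition comeagre (T : topologicalType) (A : set T) : Prop := meagre (~` A).

Definition local_homeomorphism (S T : topologicalType) (f : S -> T) : Prop :=
  forall x, exists U : set S,
    [/\ open U, U x, open (f @` U), {within U, continuous f} &
        set_inj U f /\ forall V, open V -> V `<=` U -> open (f @` V)].

Definition locally_injective (S T : topologicalType) (f : S -> T) : Prop :=
  forall x, exists U : set S, [/\ open U, U x & set_inj U f].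

Definition proper_map (S T : topologicalType) (f : S -> T) : Prop :=
  forall K : set T, compact K -> compact (f @^-1` K).

From HB Require Import structures.
From mathcomp Require Import all_boot all_order all_algebra.
From mathcomp Require Import all_classical all_reals all_analysis.
Local Open Scope classical_set_scope.
Set Implicit Arguments. Unset Strict Implicit.

(* (a) => (b): by Baire's theorem for locally compact Hausdorff spaces the
   co-meagre set pi^-1(S) is dense, and injectivity of pi on it puts it inside
   X'_0.
   (b) => (a): take S to be the complement of the grand orbit under T of
   pi(X' \ X'_0), the points with a non-singleton fibre.  Since X'_0 is dense,
   an open set contained in pi^-1(pi(C)) for a closed C lies in C, so pi maps
   meagre sets to meagre sets and so does pi^-1 o pi.  X' \ X'_0 is meagre: two
   points of one fibre are separated by basic sets b1, b2 with disjoint compact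
   closures, and cl b1 /\ pi^-1(pi(cl b2)) is then closed with empty interior.
   Images under T' (injective on each of countably many compacta covering X')
   and preimages under the open map T' preserve meagreness, so the preimage of
   the grand orbit, contained in the union over m, n of
   T'^-n(pi^-1(pi(T'^m(X' \ X'_0)))), is meagre, and so is its image. *)

Lemma dependent_choice (A : Type) (P : A -> Prop) (R : nat -> A -> A -> Prop) (a0 : A) :
  P a0 -> (forall n a, P a -> exists2 b, P b & R n a b) ->
  exists f : nat -> A, f 0%N = a0 /\ forall n, P (f n) /\ R n (f n) (f n.+1).
Proof.
move=> Pa0 step.
have /choice[g hg] : forall na : nat * A, exists b, P na.2 -> P b /\ R na.1 na.2 b.
  move=> [n a]; have [/(step n)[b Pb Rb]|nPa] := pselect (P a); first by exists b.
  by exists a.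
pose f := fix f n := if n is m.+1 then g (m, f m) else a0.
have Pf n : P (f n) by elim: n => //= n /(hg (n, f n))[].
by exists f; split => // n; split => //; exact: (hg (n, f n) (Pf n)).2.
Qed.

Lemma iter_morph (A B : Type) (h : A -> B) (f : A -> A) (g : B -> B) :
  {morph h : x / f x >-> g x} -> forall n, {morph h : x / iter n f x >-> iter n g x}.
Proof. by move=> hfg; elim=> // n IH x /=; rewrite hfg IH. Qed.

Lemma denseS (T : topologicalType) (A B : set T) : A `<=` B -> dense A -> dense B.
Proof. by move=> AB dA W W0 oW; have [x [Wx /AB Bx]] := dA W W0 oW; exists x. Qed.

Section Meagre.
Variable T : topologicalType.

Definition closed_nowhere_dense (A : set T) := closed A /\ interior A = set0.

Lemma closed_nowhere_dense0 : closed_nowhere_dense set0.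
Proof. by split; [exact: closed0 | exact: interior0]. Qed.

Lemma open_subset_interior0 (A W : set T) :
  interior A = set0 -> open W -> W `<=` A -> W = set0.
Proof. by move=> A0 oW; rewrite (open_subsetE _ oW) A0 subset0. Qed.

Lemma meagreP (A : set T) : meagre A <->
  exists C : nat -> set T,
    (forall n, closed_nowhere_dense (C n)) /\ A `<=` \bigcup_n C n.
Proof.
split.
  move=> [F [nF ->]]; exists (fun n => closure (F n)); split.
    by move=> n; split; [exact: closed_closure | exact: nF].
  by move=> x [n _ Fx]; exists n => //; exact: subset_closure.
move=> [C [cC AC]]; exists (fun n => A `&` C n); split.
  move=> n; have [clC iC] := cC n.
  apply: open_subset_interior0 iC (@open_interior _ _) _.
  apply: subset_trans (@interior_subset _ _) _.
  by rewrite [X in _ `<=` X](closure_id _).1 //; apply: closureS; exact: subIsetr.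
apply/seteqP; split; last by move=> x [n _ []].
by move=> x Ax; have [n _ Cx] := AC x Ax; exists n.
Qed.

Lemma sub_meagre (A B : set T) : A `<=` B -> meagre B -> meagre A.
Proof.
by move=> AB /meagreP[C [cC BC]]; apply/meagreP; exists C; split => // x /AB /BC.
Qed.

Lemma closed_nowhere_dense_meagre (A : set T) : closed_nowhere_dense A -> meagre A.
Proof. by move=> cA; apply/meagreP; exists (fun=> A); split => // x Ax; exists 0%N. Qed.

Lemma meagre_bigcup (I : Type) (D : set I) (F : I -> set T) :
  countable D -> (forall i, D i -> meagre (F i)) -> meagre (\bigcup_(i in D) F i).
Proof.
move=> /pfcard_geP[->|/surjfunPex[e ->]] mF.
  by rewrite bigcup_set0; exact/closed_nowhere_dense_meagre/closed_nowhere_dense0.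
have /choice[C hC] := fun k => (meagreP (F (e k))).1 (mF _ (imageT e k)).
apply/meagreP; exists (fun j => if unpickle j is Some (k, n) then C k n else set0).
split=> [j|x [_ [k _ <-] Fx]].
  by case: (unpickle j) => [[k n]|]; [exact: (hC k).1 | exact: closed_nowhere_dense0].
by have [n _ Cx] := (hC k).2 x Fx; exists (pickle (k, n)) => //; rewrite pickleK.
Qed.

End Meagre.

Lemma decreasing_compact_closure_cap (T : topologicalType) (V : nat -> set T) :
  (forall n, V n.+1 `<=` V n) -> (forall n, V n !=set0) -> compact (closure (V 0%N)) ->
  exists p, forall n, closure (V n) p.
Proof.
move=> VS V0 cV.
have Vle m n : (m <= n)%N -> V n `<=` V m.
  elim: n => [|n IH]; first by rewrite leqn0 => /eqP ->.
  by rewrite leq_eqVlt ltnS => /orP[/eqP -> // | /IH]; apply: subset_trans.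
have /choice[x Vx] := V0.
have /cV[p [_ clp]] : (x @ \oo) (closure (V 0%N)).
  apply: (@filterE _ \oo) => n; apply: subset_closure.
  exact: Vle 0%N n (leq0n n) _ (Vx n).
exists p => m; move: clp; rewrite clusterE; apply; rewrite /=.
by near=> n; apply: (Vle m n) => //; near: n; exact: nbhs_infty_ge.
Unshelve. all: by end_near.
Qed.

Section LocallyCompactHausdorff.
Variable T : topologicalType.
Hypotheses (hT : hausdorff_space T) (lcT : locally_compact [set: T]).

Lemma nbhs_compact_closure (x : T) (W : set T) : open W -> W x ->
  exists D, [/\ nbhs x D, closure D `<=` W & compact (closure D)].
Proof.
move=> oW Wx; have [K Kx [cK clK]] := lcT (I : [set: T] x).
rewrite withinET in Kx.
have [D nD cDW] := compact_regular hT cK Kx (open_nbhs_nbhs (conj oW Wx)).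
have clDK : closure (D `&` K) `<=` K.
  by rewrite [X in _ `<=` X](closure_id _).1 //; apply: closureS; exact: subIsetr.
exists (D `&` K); split; first exact: filterI.
  by apply: subset_trans cDW; apply: closureS; exact: subIsetl.
exact: subclosed_compact (@closed_closure _ _) cK clDK.
Qed.

Lemma basis_compact_closure (B : set (set T)) : basis B ->
  forall (x : T) (W : set T), open W -> W x ->
  exists b, [/\ B b, b x, closure b `<=` W & compact (closure b)].
Proof.
move=> [_ Bx] x W oW Wx; have [D [nD cDW cD]] := nbhs_compact_closure oW Wx.
have [b [Bb bx] bD] := Bx x D nD.
exists b; split => //; first exact: subset_trans (closureS bD) cDW.
exact: subclosed_compact (@closed_closure _ _) cD (closureS bD).
Qed.

Lemma open_compact_closure_avoid (C W : set T) :
  closed_nowhere_dense C -> open W -> W !=set0 ->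
  exists2 V, open V /\ V !=set0 & closure V `<=` W `\` C /\ compact (closure V).
Proof.
move=> [clC iC] oW W0.
have oWC : open (W `\` C) by apply: openI => //; exact: closed_openC.
have [x [Wx Cx]] : (W `\` C) !=set0.
  apply: contrapT => WC0; have [w Ww] := W0.
  suff W_0 : W = set0 by move: Ww; rewrite W_0.
  apply: open_subset_interior0 iC oW _ => y Wy.
  by apply: contrapT => Cy; apply: WC0; exists y.
have [D [nD cD cptD]] := nbhs_compact_closure oWC (conj Wx Cx).
have clDD : closure D° `<=` closure D by apply: closureS; exact: interior_subset.
exists D°; split; first exact: open_interior.
- by exists x; apply: nbhs_singleton; exact: nbhs_interior.
- exact: subset_trans clDD cD.
- exact: subclosed_compact (@closed_closure _ _) cptD clDD.
Qed.

Lemma comeagre_dense (P : set T) : comeagre P -> dense P.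
Proof.
move=> /meagreP[C [cC PC]] W W0 oW.
have [V [V0 hV]] := @dependent_choice (set T)
  (fun U => open U /\ U !=set0)
  (fun n U U' => closure U' `<=` U `\` C n /\ compact (closure U'))
  W (conj oW W0) (fun n U PU => open_compact_closure_avoid (cC n) PU.1 PU.2).
have VC n : closure (V n.+1) `<=` V n `\` C n by have [_ []] := hV n.
have [p clp] : exists p, forall n, closure (V n.+1) p.
  apply: decreasing_compact_closure_cap; last by have [_ []] := hV 0%N.
    by move=> n x Vx; have [] := VC n.+1 x (subset_closure Vx).
  by move=> n; have [[]] := hV n.+1.
exists p; split; first by rewrite -V0; have [] := VC 0%N p (clp 0%N).
by apply: contrapT => /PC[n _ Cp]; have [] := VC n p (clp n).
Qed.

End LocallyCompactHausdorff.

Lemma proper_closed_map (S U : topologicalType) (f : S -> U) :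
  hausdorff_space U -> locally_compact [set: U] -> proper_map f -> continuous f ->
  forall C, closed C -> closed (f @` C).
Proof.
move=> hU lcU pf cf C clC; apply/closure_id/seteqP; split; first exact: subset_closure.
move=> x clx; apply: contrapT => fCx.
have [K Kx [cK clK]] := lcU x I; rewrite withinET in Kx.
pose M := f @` (f @^-1` K `&` C).
have cM : compact M.
  apply: continuous_compact; first exact: continuous_subspaceT.
  by apply: compact_closedI => //; exact: pf.
have nM : nbhs x (K `&` ~` M).
  apply: filterI => //; apply: open_nbhs_nbhs; split.
    by apply: closed_openC; exact: compact_closed.
  by move=> [c [Kc Cc] fcx]; apply: fCx; exists c.
have [_ [[c Cc <-] [Kfc]]] := clx _ nM.
by apply; exists c.
Qed.

Section LocalHomeomorphism.
Variables (S U : topologicalType) (f : S -> U).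
Hypothesis lhf : local_homeomorphism f.

Lemma local_homeomorphism_continuous : continuous f.
Proof.
move=> x; have [V [oV Vx _ cV _]] := lhf x.
by move: cV; rewrite continuous_open_subspace // => /(_ x); apply; exact/mem_set.
Qed.

Lemma local_homeomorphism_open (W : set S) : open W -> open (f @` W).
Proof.
move=> oW.
have -> : f @` W = \bigcup_(x in W) f @` (W `&` projT1 (cid (lhf x))).
  apply/seteqP; split; last by move=> _ [x Wx [y [Wy _] <-]]; exists y.
  move=> _ [x Wx <-]; exists x => //; exists x => //; split => //.
  by case: (cid (lhf x)) => V /= [].
apply: bigcup_open => x Wx; case: (cid (lhf x)) => V /= [oV Vx _ _ [_ hV]].
by apply: hV; [exact: openI | exact: subIsetr].
Qed.

Lemma local_homeomorphism_locally_injective : locally_injective f.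
Proof. by move=> x; have [V [oV Vx _ _ [iV _]]] := lhf x; exists V. Qed.

End LocalHomeomorphism.

Section MeagreMaps.
Variables (S U : topologicalType) (f : S -> U).
Hypothesis cf : continuous f.

Lemma closed_nowhere_dense_preimage (C : set U) :
  (forall W, open W -> open (f @` W)) ->
  closed_nowhere_dense C -> closed_nowhere_dense (f @^-1` C).
Proof.
move=> fo [clC iC]; split; first exact: (continuous_closedP f).1.
have f_int0 : f @` (f @^-1` C)° = set0.
  apply: open_subset_interior0 iC (fo _ (@open_interior _ _)) _.
  by move=> _ [x /interior_subset Cx <-].
apply/seteqP; split => // x ix.
suff : (f @` (f @^-1` C)°) (f x) by rewrite f_int0.
by exists x.
Qed.

Lemma meagre_preimage (A : set U) :
  (forall W, open W -> open (f @` W)) -> meagre A -> meagre (f @^-1` A).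
Proof.
move=> fo /meagreP[C [cC AC]]; apply/meagreP; exists (fun n => f @^-1` C n).
by split=> [n|x /AC]; [exact: closed_nowhere_dense_preimage | ].
Qed.

Hypothesis hU : hausdorff_space U.
Variables (K V : set S).
Hypotheses (cK : compact K) (oV : open V) (KV : K `<=` V) (iV : set_inj V f).

Lemma closed_nowhere_dense_image_compact (C : set S) :
  closed_nowhere_dense C -> closed_nowhere_dense (f @` (K `&` C)).
Proof.
move=> [clC iC]; split.
  apply: compact_closed hU _; apply: continuous_compact.
    exact: continuous_subspaceT.
  exact: compact_closedI cK clC.
set W := interior _.
have VWC : V `&` f @^-1` W `<=` C.
  move=> u [Vu /interior_subset [d [Kd Cd] fdu]].
  by have <- : d = u by apply: iV; rewrite ?inE //; exact: KV.
have oVW : open (V `&` f @^-1` W).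
  by apply: openI oV _; apply: open_comp (@open_interior _ _) => x _; exact: cf.
have VW0 := open_subset_interior0 iC oVW VWC.
apply/seteqP; split => // w Ww; have [d [Kd _] fdw] := interior_subset Ww.
suff : (V `&` f @^-1` W) d by rewrite VW0.
by split; [exact: KV | rewrite /= fdw].
Qed.

Lemma meagre_image_compact (A : set S) : meagre A -> meagre (f @` (K `&` A)).
Proof.
move=> /meagreP[C [cC AC]]; apply/meagreP.
exists (fun n => f @` (K `&` C n)); split.
  by move=> n; exact: closed_nowhere_dense_image_compact.
by move=> _ [x [Kx /AC[n _ Cx]] <-]; exists n => //; exists x.
Qed.

End MeagreMaps.

Lemma locally_injective_meagre_image (S U : topologicalType) (f : S -> U) :
  @second_countable S -> hausdorff_space S -> locally_compact [set: S] ->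
  hausdorff_space U -> continuous f -> locally_injective f ->
  forall A, meagre A -> meagre (f @` A).
Proof.
move=> [B cB bB] hS lcS hU cf lif A mA.
pose D := [set b | B b /\ compact (closure b) /\
  exists V, [/\ open V, closure b `<=` V & set_inj V f]].
have cD : countable D by apply: sub_countable cB; apply: subset_card_le => b [].
apply: (@sub_meagre _ _ (\bigcup_(b in D) f @` (closure b `&` A))).
  move=> _ [x Ax <-]; have [V [oV Vx iV]] := lif x.
  have [b [Bb bx bV cb]] := basis_compact_closure hS lcS bB oV Vx.
  exists b; first by split => //; split => //; exists V.
  by exists x => //; split => //; exact: subset_closure.
apply: meagre_bigcup cD _ => b [_ [cb [V [oV bV iV]]]].
exact: (meagre_image_compact cf hU cb oV bV iV mA).
Qed.

Lemma iter_meagre_image (S : topologicalType) (f : S -> S) :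
  (forall A, meagre A -> meagre (f @` A)) ->
  forall n A, meagre A -> meagre (iter n f @` A).
Proof.
move=> mf; elim=> [|n IH] A mA; first by rewrite image_id.
by apply: sub_meagre (mf _ (IH _ mA)) => _ [x Ax <-]; exists (iter n f x) => //; exists x.
Qed.

Lemma iter_meagre_preimage (S : topologicalType) (f : S -> S) :
  (forall A, meagre A -> meagre (f @^-1` A)) ->
  forall n A, meagre A -> meagre (iter n f @^-1` A).
Proof. by move=> mf; elim=> // n IH A mA; exact: IH _ (mf _ mA). Qed.

Definition singleton_fibres (X X' : Type) (pi : X' -> X) : set X' :=
  [set x' | pi @^-1` [set pi x'] = [set x']].

Section SingletonFibres.
Variables (X X' : topologicalType) (pi : X' -> X).
Hypotheses (hX : hausdorff_space X) (lcX : locally_compact [set: X])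
  (ppi : proper_map pi) (cpi : continuous pi).

Lemma closed_saturation (C : set X') : closed C -> closed (pi @^-1` (pi @` C)).
Proof.
by move=> clC; apply: (continuous_closedP pi).1 => //; exact: proper_closed_map.
Qed.

Hypothesis dX0 : dense (singleton_fibres pi).

Lemma open_sub_saturation (C W : set X') :
  closed C -> open W -> W `<=` pi @^-1` (pi @` C) -> W `<=` C.
Proof.
move=> clC oW WC w Ww; apply: contrapT => Cw.
have oWC : open (W `\` C) by apply: openI => //; exact: closed_openC.
have [z [[Wz Cz] X0z]] := dX0 (ex_intro _ w (conj Ww Cw)) oWC.
have [c Cc pcz] := WC z Wz.
have : (pi @^-1` [set pi z]) c by [].
by rewrite X0z => cz; apply: Cz; rewrite -cz.
Qed.

Lemma closed_nowhere_dense_saturation (C : set X') :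
  closed_nowhere_dense C -> closed_nowhere_dense (pi @^-1` (pi @` C)).
Proof.
move=> [clC iC]; split; first exact: closed_saturation.
apply: open_subset_interior0 iC (@open_interior _ _) _.
by apply: open_sub_saturation => //; [exact: open_interior | exact: interior_subset].
Qed.

Lemma meagre_saturation (A : set X') : meagre A -> meagre (pi @^-1` (pi @` A)).
Proof.
move=> /meagreP[C [cC AC]]; apply/meagreP.
exists (fun n => pi @^-1` (pi @` C n)); split.
  by move=> n; exact: closed_nowhere_dense_saturation.
by move=> y [x /AC[n _ Cx] pxy]; exists n => //; exists x.
Qed.

Lemma meagre_not_singleton_fibres :
  @second_countable X' -> hausdorff_space X' -> locally_compact [set: X'] ->
  meagre (~` singleton_fibres pi).
Proof.
move=> [B cB bB] hX' lcX'.
pose D := [set bb : set X' * set X' |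
  (B `*` B) bb /\ closure bb.1 `&` closure bb.2 = set0].
have cD : countable D.
  by apply: sub_countable (countableX cB cB); apply: subset_card_le => bb [].
apply: (@sub_meagre _ _
  (\bigcup_(bb in D) (closure bb.1 `&` pi @^-1` (pi @` closure bb.2)))).
  move=> x nX0x.
  have [y pyx yx] : exists2 y, pi y = pi x & y != x.
    apply: contrapT => h; apply: nX0x; apply/seteqP; split; last by move=> _ ->.
    by move=> y pyx; apply: contrapT => yx; apply: h; exists y => //; exact/eqP.
  have := hX'; rewrite open_hausdorff => /(_ x y); rewrite eq_sym => /(_ yx).
  move=> [[U V] /= [Ux Vy] [oU oV /eqP UV]]; rewrite inE in Ux; rewrite inE in Vy.
  have [b1 [Bb1 b1x cb1 _]] := basis_compact_closure hX' lcX' bB oU Ux.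
  have [b2 [Bb2 b2y cb2 _]] := basis_compact_closure hX' lcX' bB oV Vy.
  exists (b1, b2).
    split => //; apply/seteqP; split => // z [z1 z2].
    suff : (U `&` V) z by rewrite UV.
    by split; [exact: cb1 | exact: cb2].
  by split; [exact: subset_closure | exists y => //; exact: subset_closure].
apply: meagre_bigcup cD _ => -[b1 b2] [_ /= b12].
apply: closed_nowhere_dense_meagre; split.
  by apply: closedI; [exact: closed_closure | exact/closed_saturation/closed_closure].
apply/seteqP; split => // z Wz; have [z1 _] := interior_subset Wz.
have z2 : closure b2 z.
  apply: open_sub_saturation (@closed_closure _ _) (@open_interior _ _) _ _ Wz.
  by move=> w /interior_subset[].
by suff : (closure b1 `&` closure b2) z by rewrite b12.
Qed.

Hypothesis spi : set_surj [set: X'] [set: X] pi.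

Lemma closed_nowhere_dense_image (C : set X') :
  closed_nowhere_dense C -> closed_nowhere_dense (pi @` C).
Proof.
move=> cC; have [clC _] := cC; split; first exact: proper_closed_map.
have [_ iS] := closed_nowhere_dense_saturation cC.
have pi_int0 : pi @^-1` interior (pi @` C) = set0.
  apply: open_subset_interior0 iS _ (fun x => @interior_subset _ _ (pi x)).
  by apply: open_comp (@open_interior _ _) => x _; exact: cpi.
apply/seteqP; split => // y iy; have [x _ pxy] := spi (I : [set: X] y).
suff : (pi @^-1` interior (pi @` C)) x by rewrite pi_int0.
by rewrite /= pxy.
Qed.

Lemma meagre_image (A : set X') : meagre A -> meagre (pi @` A).
Proof.
move=> /meagreP[C [cC AC]]; apply/meagreP; exists (fun n => pi @` C n); split.
  by move=> n; exact: closed_nowhere_dense_image.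
by move=> _ [x /AC[n _ Cx] <-]; exists n => //; exists x.
Qed.

End SingletonFibres.

Definition grand_orbit (S : Type) (f : S -> S) (A : set S) : set S :=
  [set x | exists m n, exists2 y, A y & iter n f x = iter m f y].

Lemma grand_orbit_preimage (S : Type) (f : S -> S) (A : set S) :
  f @^-1` grand_orbit f A = grand_orbit f A.
Proof.
apply/seteqP; split=> x [m [n [y Ay e]]].
  by exists m, n.+1; exists y; rewrite // iterSr.
by exists m.+1, n; exists y; rewrite // -iterSr iterS e.
Qed.

Lemma sub_grand_orbit (S : Type) (f : S -> S) (A : set S) : A `<=` grand_orbit f A.
Proof. by move=> x Ax; exists 0%N, 0%N; exists x. Qed.

Lemma meagre_preimage_grand_orbit (X X' : topologicalType)
    (T : X -> X) (T' : X' -> X') (pi : X' -> X) (N : set X') :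
  @second_countable X' -> hausdorff_space X' -> locally_compact [set: X'] ->
  hausdorff_space X -> locally_compact [set: X] ->
  proper_map pi -> continuous pi -> dense (singleton_fibres pi) ->
  local_homeomorphism T' -> {morph pi : x / T' x >-> T x} ->
  meagre N -> meagre (pi @^-1` grand_orbit T (pi @` N)).
Proof.
move=> scX' hX' lcX' hX lcX ppi cpi dX0 lhT' piT mN.
have cT' := local_homeomorphism_continuous lhT'.
have mimg := iter_meagre_image (locally_injective_meagre_image scX' hX' lcX' hX' cT'
  (local_homeomorphism_locally_injective lhT')).
have mpre := iter_meagre_preimage
  (fun A => meagre_preimage cT' (local_homeomorphism_open lhT') (A := A)).
apply: (@sub_meagre _ _ (\bigcup_(mn in [set: nat * nat])
    iter mn.2 T' @^-1` (pi @^-1` (pi @` (iter mn.1 T' @` N))))).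
  move=> x' [m [n [_ [z Nz <-] e]]]; exists (m, n) => //=.
  by exists (iter m T' z); [exists z | rewrite !(iter_morph piT) e].
apply: meagre_bigcup => [|[m n] _]; first exact: countableP.
exact: mpre _ _ (meagre_saturation hX lcX ppi cpi dX0 (mimg m _ mN)).
Qed.

Lemma singleton_fibres_dense (X X' : topologicalType) (pi : X' -> X) (S : set X) :
  hausdorff_space X' -> locally_compact [set: X'] ->
  comeagre (pi @^-1` S) -> set_inj (pi @^-1` S) pi -> dense (singleton_fibres pi).
Proof.
move=> hX' lcX' cS iS; apply: denseS (comeagre_dense hX' lcX' cS).
move=> x Sx; apply/seteqP; split=> [y /= pyx|_ ->] //.
by apply: iS; rewrite ?inE //= pyx.
Qed.

Theorem corollary4p13 (X X' : topologicalType)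
    (T : X -> X) (T' : X' -> X') (pi : X' -> X) :
  @second_countable X -> locally_compact [set: X] -> hausdorff_space X ->
  @second_countable X' -> locally_compact [set: X'] -> hausdorff_space X' ->
  local_homeomorphism T' ->
  continuous T -> locally_injective T ->
  proper_map pi -> continuous pi -> set_surj [set: X'] [set: X] pi ->
  pi \o T' = T \o pi ->
  ((exists S : set X,
      [/\ T @^-1` S = S, comeagre S, comeagre (pi @^-1` S)
        & set_bij (pi @^-1` S) S pi])
   <->
   dense [set x' : X' | pi @^-1` [set pi x'] = [set x']]).
Proof.
move=> _ lcX hX scX' lcX' hX' lhT' _ _ ppi cpi spi comm.
split=> [[S [_ _ cS [_ iS _]]]|dX0]; first exact: singleton_fibres_dense cS iS.
have piT : {morph pi : x / T' x >-> T x} by move=> x; exact: (congr1 (@^~ x) comm).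
pose G := grand_orbit T (pi @` ~` singleton_fibres pi).
have mG' : meagre (pi @^-1` G) := meagre_preimage_grand_orbit scX' hX' lcX' hX lcX
  ppi cpi dX0 lhT' piT (meagre_not_singleton_fibres hX lcX ppi cpi dX0 scX' hX' lcX').
exists (~` G); split.
- by rewrite preimage_setC; congr setC; exact: grand_orbit_preimage.
- rewrite /comeagre setCK; apply: sub_meagre (meagre_image hX lcX ppi cpi dX0 spi mG').
  by move=> x Gx; have [x' _ px'] := spi x I; exists x'; rewrite //= px'.
- by rewrite /comeagre preimage_setC setCK.
- split=> [x //|a b /set_mem Ga /set_mem Gb pab|x Gx].
    have X0a : singleton_fibres pi a.
      by apply: contrapT => X0a; apply: Ga; apply: sub_grand_orbit; exact: imageP.
    suff : (pi @^-1` [set pi a]) b by rewrite X0a.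
    by rewrite /= pab.
  have [x' _ px'] := spi x I; exists x' => //.
  by rewrite /preimage /= px'.
Qed.
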